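(* Let $\mathcal H$ be finite-dimensional, $I\subseteq\mathbb R$ an open interval, and for $j=1,\dots,n$ let $\{\rho_{j,\theta}\}_{\theta\in I}$ be differentiable families of positive definite density matrices on $\mathcal H$. Let $\varrho_\theta=\rho_{1,\theta}\otimes\cdots\otimes\rho_{n,\theta}$ on $\mathfrak H=\mathcal H^{\otimes n}$ and let $\Theta$ be a self-adjoint operator on $\mathfrak H$, independent of $\theta$, which is an unbiased estimator: $\operatorname{Tr}(\varrho_\theta\Theta)=\theta$ for all $\theta\in I$. Then $$\operatorname{Var}_\theta(\Theta):=\operatorname{Tr}\bigl(\varrho_\theta(\Theta-\theta)^2\bigr)\ \ge\ \frac{1}{\sum_{j=1}^n\widetilde{\mathbf I}_j(\theta)},$$ where $\widetilde{\mathbf I}_j(\theta)=\operatorname{Tr}(\rho_{j,\theta}\widetilde H_j(\theta)^2)$ and $\widetilde H_j(\theta)=\frac12(\rho_{j,\theta}^{-1}\rho_{j,\theta}'+\rho_{j,\theta}'\rho_{j,\theta}^{-1})$. Moreover $\sum_j\widetilde{\mathbf I}_j(\theta)=\operatorname{Tr}(\varrho_\theta\widetilde{\mathbf H}(\theta)^2)$ with $\widetilde{\mathbf H}=\sum_j I^{\otimes(j-1)}\otimes\widetilde H_j\otimes I^{\otimes(n-j)}$. In particular, for $n=1$, $\operatorname{Var}_\theta(\Theta)\ge1/\widetilde{\mathbf I}(\theta)$, and if all $\rho_{j,\theta}=\rho_\theta$ then $\operatorname{Var}_\theta(\Theta)\ge1/(n\widetilde{\mathbf I}(\theta))$. *)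

From HB Require Import structures.
From mathcomp Require Import all_boot all_order all_algebra.
From mathcomp Require Import all_classical all_reals all_analysis.
From mathcomp Require Import complex.
Set Implicit Arguments. Unset Strict Implicit. Unset Printing Implicit Defensive.
Import Order.TTheory GRing.Theory Num.Theory.
Import numFieldNormedType.Exports.
Local Open Scope ring_scope.
Local Open Scope complex_scope.

Section Defs.
Variable R : realType.
Local Notation C := R[i].

Definition adjmx {m n : nat} (A : 'M[C]_(m, n)) : 'M[C]_(n, m) :=
  (map_mx (@conjc R) A)^T.

Definition selfadjoint {d : nat} (A : 'M[C]_d) : Prop := adjmx A = A.

Definition posdef {d : nat} (A : 'M[C]_d) : Prop :=
  selfadjoint A /\
  forall v : 'cV[C]_d, v != 0 -> 0 < (adjmx v *m A *m v) 0 0.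

Definition posdef_density {d : nat} (A : 'M[C]_d) : Prop :=
  posdef A /\ \tr A = 1.

Definition mx_derivable {d : nat} (f : R -> 'M[C]_d) (t : R) : Prop :=
  forall i j, derivable (fun s => complex.Re (f s i j)) t 1 /\
              derivable (fun s => complex.Im (f s i j)) t 1.

Definition mx_derive {d : nat} (f : R -> 'M[C]_d) (t : R) : 'M[C]_d :=
  \matrix_(i, j) Complex (derive1 (fun s => complex.Re (f s i j)) t)
                         (derive1 (fun s => complex.Im (f s i j)) t).

Definition Htilde {d : nat} (rho : R -> 'M[C]_d) (t : R) : 'M[C]_d :=
  (2%:R)^-1 *: (invmx (rho t) *m mx_derive rho t + mx_derive rho t *m invmx (rho t)).

Definition Itilde {d : nat} (rho : R -> 'M[C]_d) (t : R) : C :=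
  \tr (rho t *m (Htilde rho t *m Htilde rho t)).

(* The n-fold tensor product space H^{\otimes n} has the orthonormal basis
   indexed by multi-indices x : 'I_n -> 'I_d; we index it by the finite type
   mindex n d, and matrices on it are 'M_(tdim n d) with tdim n d = d^n. *)
Definition mindex (n d : nat) := {ffun 'I_n -> 'I_d}.
Definition tdim (n d : nat) := #|{: mindex n d}|.

Definition tensprod {n d : nat} (rho : 'I_n -> 'M[C]_d) : 'M[C]_(tdim n d) :=
  \matrix_(a, b) \prod_(k < n)
      rho k ((enum_val a : mindex n d) k) ((enum_val b : mindex n d) k).

Definition embed_at {n d : nat} (j : 'I_n) (A : 'M[C]_d) : 'M[C]_(tdim n d) :=
  \matrix_(a, b)
    (A ((enum_val a : mindex n d) j) ((enum_val b : mindex n d) j) *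
     \prod_(k < n | k != j)
        ((((enum_val a : mindex n d) k) == ((enum_val b : mindex n d) k))%:R)).

End Defs.

From HB Require Import structures.
From mathcomp Require Import all_boot all_order all_algebra.
From mathcomp Require Import all_classical all_reals all_analysis.
From mathcomp Require Import complex.
From mathcomp Require Import ring.
From mathcomp Require Import spectral.
Import Order.TTheory GRing.Theory Num.Theory.
Import numFieldNormedType.Exports.
Local Open Scope ring_scope.
Local Open Scope complex_scope.
Set Implicit Arguments. Unset Strict Implicit. Unset Printing Implicit Defensive.

(* Let D be the derivative of the product state rho at theta (Leibniz rule).
   Differentiating unbiasedness and Tr rho = 1 gives Tr (D (Theta - theta)) = 1.
   For the positive form <Y, Z> = Tr (Y^* rho Z) and A = rho^-1 D, this reads
   <Theta - theta, A> = 1, so Cauchy-Schwarz gives Var >= 1 / <A, A>.  The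
   symmetrized derivative H = (A + A^* )/2 is the sum of the embedded Htilde_j,
   and <H, H> = <A, A> + <A - A^*, A - A^*>/4 >= <A, A>.  Finally <H, H> is the
   sum of the Itilde_j: the cross terms vanish because Tr (rho_j Htilde_j) =
   Tr rho_j' = 0. *)

Section Adjoint.
Variable R : realType.
Local Notation C := R[i].

Lemma adjmxM m k p (A : 'M[C]_(m, k)) (B : 'M[C]_(k, p)) :
  adjmx (A *m B) = adjmx B *m adjmx A.
Proof. by rewrite /adjmx map_mxM trmx_mul. Qed.

Lemma adjmxK m k (A : 'M[C]_(m, k)) : adjmx (adjmx A) = A.
Proof. by apply/matrixP => i j; rewrite !mxE conjcK. Qed.

Lemma adjmxD m k (A B : 'M[C]_(m, k)) : adjmx (A + B) = adjmx A + adjmx B.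
Proof. by rewrite /adjmx map_mxD linearD. Qed.

Lemma adjmxN m k (A : 'M[C]_(m, k)) : adjmx (- A) = - adjmx A.
Proof. by rewrite /adjmx map_mxN linearN. Qed.

Lemma adjmxZ m k (c : C) (A : 'M[C]_(m, k)) : adjmx (c *: A) = conjc c *: adjmx A.
Proof. by rewrite /adjmx map_mxZ linearZ. Qed.

Lemma adjmx0 m k : adjmx (0 : 'M[C]_(m, k)) = 0.
Proof. by rewrite /adjmx map_mx0 trmx0. Qed.

Lemma adjmx_scalar k (c : C) : adjmx (c%:M : 'M[C]_k) = (conjc c)%:M.
Proof.
by apply/matrixP => i j; rewrite !mxE eq_sym; case: (i == j); rewrite ?rmorph0.
Qed.

Lemma adjmx_sum k I (r : seq I) (F : I -> 'M[C]_k) :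
  adjmx (\sum_(i <- r) F i) = \sum_(i <- r) adjmx (F i).
Proof. exact: (big_morph _ (@adjmxD k k) (@adjmx0 k k)). Qed.

Lemma adjmx_trC k (A : 'M[C]_k) : adjmx A = (A ^t* )%sesqui.
Proof. by rewrite /adjmx map_trmx. Qed.

Lemma selfadjoint_invmx k (A : 'M[C]_k) :
  A \in unitmx -> selfadjoint A -> selfadjoint (invmx A).
Proof.
move=> uA saA; have AV : adjmx (invmx A) *m A = 1%:M.
  by rewrite -{2}saA -adjmxM mulmxV // adjmx_scalar rmorph1.
by rewrite /selfadjoint -[LHS]mulmx1 -(mulmxV uA) mulmxA AV mul1mx.
Qed.

Lemma mxtrace_adjmx_mul_ge0 m k (M : 'M[C]_(m, k)) : 0 <= \tr (adjmx M *m M).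
Proof.
apply: sumr_ge0 => i _; rewrite mxE; apply: sumr_ge0 => j _.
by rewrite !mxE mulrC mul_conjC_ge0.
Qed.

Lemma adjmx_mul_gt0 k (v : 'cV[C]_k) : v != 0 -> 0 < (adjmx v *m v) 0 0.
Proof.
move=> v0; have [i vi0] : exists i, v i 0 != 0.
  apply/existsP; apply: contraR v0 => /existsPn v_eq0.
  by apply/eqP/matrixP => i j; rewrite ord1 mxE; exact/eqP/negPn/v_eq0.
rewrite mxE (bigD1 i) //= ltr_wpDr ?sumr_ge0 // => [j _|].
  by rewrite !mxE mulrC mul_conjC_ge0.
by rewrite !mxE mulrC mul_conjC_gt0.
Qed.
End Adjoint.

Section PositiveDefinite.
Variable R : realType.
Local Notation C := R[i].
Local Open Scope sesquilinear_scope.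

Lemma posdef_unit k (A : 'M[C]_k) : posdef A -> A \in unitmx.
Proof.
move=> [saA A_gt0]; rewrite -row_free_unit -kermx_eq0.
apply/eqP/row_matrixP => i; rewrite row0.
set u := row i (kermx A).
have Au : A *m adjmx u = 0.
  by rewrite -{1}saA -adjmxM /u -row_mul mulmx_ker row0 adjmx0.
apply/eqP; apply: contraT => u0.
have u'0 : adjmx u != 0 by apply: contra u0 => /eqP u'0; rewrite -(adjmxK u) u'0 adjmx0.
by have := A_gt0 _ u'0; rewrite -mulmxA Au mulmx0 mxE ltxx.
Qed.

Lemma posdef_factor k (A : 'M[C]_k) : posdef A -> exists S : 'M[C]_k, A = adjmx S *m S.
Proof.
move=> [saA A_gt0].
have /orthomx_spectralP AE : A \is normalmx by apply/normalmxP; rewrite -adjmx_trC saA.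
have /unitarymxP UU := spectral_unitarymx A.
rewrite invmx_unitary ?spectral_unitarymx // in AE.
set U := spectralmx A in AE UU; set p := spectral_diag A in AE.
have p_gt0 i : 0 < p 0 i.
  set e := (delta_mx i 0 : 'cV[C]_k).
  have e0 : e != 0.
    by apply/eqP => /matrixP /(_ i 0); rewrite !mxE !eqxx => /eqP; rewrite oner_eq0.
  have Ue0 : U^t* *m e != 0.
    by apply: contra e0 => /eqP Ue0; rewrite -(mul1mx e) -UU -mulmxA Ue0 mulmx0.
  have -> : p 0 i = (adjmx e *m diag_mx p *m e) 0 0.
    have -> : adjmx e = delta_mx 0 i by apply/matrixP => a b; rewrite !mxE rmorph_nat andbC.
    by rewrite -rowE -colE !mxE eqxx mulr1n.
  have -> : adjmx e *m diag_mx p *m e = adjmx (U^t* *m e) *m A *m (U^t* *m e).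
    rewrite adjmxM [adjmx (U^t*)]adjmx_trC trmxCK AE !mulmxA.
    by rewrite -[_ *m U *m U^t*]mulmxA UU mulmx1 -[_ *m U *m U^t*]mulmxA UU mulmx1.
  exact: A_gt0.
pose q := \row_j sqrtC (p 0 j).
exists (diag_mx q *m U).
have saq : adjmx (diag_mx q) = diag_mx q.
  rewrite /adjmx map_diag_mx tr_diag_mx; congr diag_mx; apply/rowP => j; rewrite !mxE.
  by apply: geC0_conj; rewrite sqrtC_ge0 ltW.
rewrite adjmxM saq adjmx_trC mulmxA -[U^t* *m _ *m _]mulmxA mulmx_diag {1}AE.
by congr (_ *m diag_mx _ *m _); apply/rowP => j; rewrite !mxE -expr2 sqrtCK.
Qed.

Lemma posdef_adjmxM k (T : 'M[C]_k) : T \in unitmx -> posdef (adjmx T *m T).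
Proof.
move=> uT; split; first by rewrite /selfadjoint adjmxM adjmxK.
move=> v v0; have Tv0 : T *m v != 0.
  by apply: contra v0 => /eqP Tv0; rewrite -(mulKmx uT v) Tv0 mulmx0.
have -> : adjmx v *m (adjmx T *m T) *m v = adjmx (T *m v) *m (T *m v).
  by rewrite adjmxM !mulmxA.
exact: adjmx_mul_gt0.
Qed.
End PositiveDefinite.

Section TensorProduct.
Variables (R : realType) (n d : nat).
Local Notation C := R[i].
Local Notation N := (tdim n d).
Local Notation idx a := (enum_val a : mindex n d).

Lemma sum_mindex (F : mindex n d -> C) :
  \sum_(b : 'I_N) F (idx b) = \sum_(x : mindex n d) F x.
Proof.
symmetry; apply: (reindex (fun b : 'I_N => idx b)).
by exists enum_rank => x _; [exact: enum_valK | exact: enum_rankK].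
Qed.

Lemma mul_tensprod (A B : 'I_n -> 'M[C]_d) :
  tensprod A *m tensprod B = tensprod (fun k => A k *m B k).
Proof.
apply/matrixP => a c; rewrite !mxE.
under eq_bigr do rewrite !mxE -big_split /=.
rewrite (sum_mindex (fun y => \prod_(k < n) (A k (idx a k) (y k) * B k (y k) (idx c k)))).
under [RHS]eq_bigr do rewrite mxE.
by rewrite bigA_distr_bigA.
Qed.

Lemma tensprod1 : tensprod (fun _ : 'I_n => (1%:M : 'M[C]_d)) = 1%:M.
Proof.
apply/matrixP => a b; rewrite !mxE.
have [<-|ab] := eqVneq a b; first by apply: big1 => k _; rewrite mxE eqxx.
have [k abk] : exists k, idx a k != idx b k.
  apply/existsP; apply: contraR ab => /existsPn ab.
  by apply/eqP/enum_val_inj/ffunP => k; apply/eqP/negPn/ab.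
by rewrite (bigD1 k) //= mxE (negbTE abk) mul0r.
Qed.

Lemma mxtrace_tensprod (A : 'I_n -> 'M[C]_d) :
  \tr (tensprod A) = \prod_(k < n) \tr (A k).
Proof.
under [LHS]eq_bigr do rewrite mxE.
by rewrite (sum_mindex (fun y => \prod_(k < n) A k (y k) (y k))) bigA_distr_bigA.
Qed.

Lemma adjmx_tensprod (A : 'I_n -> 'M[C]_d) :
  adjmx (tensprod A) = tensprod (fun k => adjmx (A k)).
Proof.
by apply/matrixP => a b; rewrite !mxE rmorph_prod; apply: eq_bigr => k _; rewrite !mxE.
Qed.

Lemma embed_atE (j : 'I_n) (A : 'M[C]_d) :
  embed_at j A = tensprod (fun k => if k == j then A else 1%:M).
Proof.
apply/matrixP => a b; rewrite !mxE [RHS](bigD1 j) //= eqxx; congr (_ * _).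
by apply: eq_bigr => k kj; rewrite (negbTE kj) mxE.
Qed.

Lemma embed_atD (j : 'I_n) (A B : 'M[C]_d) :
  embed_at j (A + B) = embed_at j A + embed_at j B.
Proof. by apply/matrixP => a b; rewrite !mxE mulrDl. Qed.

Lemma embed_atZ (j : 'I_n) (c : C) (A : 'M[C]_d) :
  embed_at j (c *: A) = c *: embed_at j A.
Proof. by apply/matrixP => a b; rewrite !mxE mulrA. Qed.

Section Invertible.
Variable A : 'I_n -> 'M[C]_d.
Hypothesis A_unit : forall k, A k \in unitmx.

Lemma mulmx_tensprodV : tensprod A *m tensprod (fun k => invmx (A k)) = 1%:M.
Proof.
by rewrite mul_tensprod -tensprod1; congr tensprod; apply: funext => k; exact: mulmxV.
Qed.

Lemma tensprod_unitmx : tensprod A \in unitmx.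
Proof. exact: (mulmx1_unit mulmx_tensprodV).1. Qed.

Lemma invmx_tensprod : invmx (tensprod A) = tensprod (fun k => invmx (A k)).
Proof.
by rewrite -[RHS](mulKmx tensprod_unitmx) mulmx_tensprodV mulmx1.
Qed.
End Invertible.

Lemma posdef_tensprod (A : 'I_n -> 'M[C]_d) :
  (forall k, posdef (A k)) -> posdef (tensprod A).
Proof.
move=> A_pd; have [T AT] := fin_all_exists (fun k => posdef_factor (A_pd k)).
have T_unit k : T k \in unitmx.
  by have := posdef_unit (A_pd k); rewrite AT unitmx_mul => /andP[].
suff -> : tensprod A = adjmx (tensprod T) *m tensprod T.
  exact/posdef_adjmxM/tensprod_unitmx.
by rewrite adjmx_tensprod mul_tensprod; congr tensprod; apply: funext => k.
Qed.

Lemma mxtrace_tensprod_sum_embed_sqr (rho H : 'I_n -> 'M[C]_d) :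
  (forall k, \tr (rho k) = 1) -> (forall k, \tr (rho k *m H k) = 0) ->
  \tr (tensprod rho *m ((\sum_(j < n) embed_at j (H j)) *m (\sum_(j < n) embed_at j (H j))))
  = \sum_(j < n) \tr (rho j *m (H j *m H j)).
Proof.
move=> tr_rho tr_rhoH.
rewrite mulmx_suml mulmx_sumr raddf_sum; apply: eq_bigr => j _.
rewrite mulmx_sumr mulmx_sumr raddf_sum (bigD1 j) //= big1 ?addr0.
  rewrite !embed_atE !mul_tensprod mxtrace_tensprod (bigD1 j) //= eqxx big1 ?mulr1 //.
  by move=> k kj; rewrite (negbTE kj) !mulmx1 tr_rho.
move=> k kj; rewrite !embed_atE !mul_tensprod mxtrace_tensprod (bigD1 j) //= eqxx.
by rewrite eq_sym (negbTE kj) mulmx1 tr_rhoH mul0r.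
Qed.
End TensorProduct.

Section ComplexDerivative.
Variable R : realType.
Local Notation C := R[i].
Implicit Types (g h : R -> C) (t : R) (a b : C).

Definition is_cderive g t a :=
  is_derive t 1 (fun s => complex.Re (g s)) (complex.Re a) /\
  is_derive t 1 (fun s => complex.Im (g s)) (complex.Im a).

Lemma ReD (x y : C) : complex.Re (x + y) = complex.Re x + complex.Re y.
Proof. by case: x; case: y. Qed.

Lemma ImD (x y : C) : complex.Im (x + y) = complex.Im x + complex.Im y.
Proof. by case: x; case: y. Qed.

Lemma ReM (x y : C) :
  complex.Re (x * y) = complex.Re x * complex.Re y - complex.Im x * complex.Im y.
Proof. by case: x; case: y. Qed.

Lemma ImM (x y : C) :
  complex.Im (x * y) = complex.Re x * complex.Im y + complex.Im x * complex.Re y.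
Proof. by case: x; case: y. Qed.

Lemma Re_conjc (x : C) : complex.Re (conjc x) = complex.Re x.
Proof. by case: x. Qed.

Lemma Im_conjc (x : C) : complex.Im (conjc x) = - complex.Im x.
Proof. by case: x. Qed.

Lemma is_cderive_cst (c : C) t : is_cderive (fun=> c) t 0.
Proof. by split; apply: is_derive_cst. Qed.

Lemma is_cderive_Cr t : is_cderive (fun s => s%:C) t 1.
Proof. by split; [exact: is_derive_id | exact: is_derive_cst]. Qed.

Lemma is_cderiveD g h t a b : is_cderive g t a -> is_cderive h t b ->
  is_cderive (fun s => g s + h s) t (a + b).
Proof.
move=> [ga gb] [ha hb]; split.
  by under eq_fun do rewrite ReD; rewrite ReD; exact: is_deriveD.
by under eq_fun do rewrite ImD; rewrite ImD; exact: is_deriveD.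
Qed.

Lemma is_cderiveM g h t a b : is_cderive g t a -> is_cderive h t b ->
  is_cderive (fun s => g s * h s) t (a * h t + g t * b).
Proof.
move=> [ga gb] [ha hb]; split.
  under eq_fun do rewrite ReM.
  apply: is_derive_eq (is_deriveB (is_deriveM ga ha) (is_deriveM gb hb)) _.
  by rewrite ReD !ReM /GRing.scale /=; ring.
under eq_fun do rewrite ImM.
apply: is_derive_eq (is_deriveD (is_deriveM ga hb) (is_deriveM gb ha)) _.
by rewrite ImD !ImM /GRing.scale /=; ring.
Qed.

Lemma is_cderiveMr g t a (c : C) :
  is_cderive g t a -> is_cderive (fun s => g s * c) t (a * c).
Proof.
by move=> ga; have := is_cderiveM ga (is_cderive_cst c t); rewrite mulr0 addr0.
Qed.

Lemma is_cderive_conj g t a :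
  is_cderive g t a -> is_cderive (fun s => conjc (g s)) t (conjc a).
Proof.
move=> [ga gb]; split; first by under eq_fun do rewrite Re_conjc; rewrite Re_conjc.
by under eq_fun do rewrite Im_conjc; rewrite Im_conjc; exact: is_deriveN.
Qed.

Lemma is_cderive_sum (I : Type) (r : seq I) (F : I -> R -> C) (dF : I -> C) t :
  (forall i, is_cderive (F i) t (dF i)) ->
  is_cderive (fun s => \sum_(i <- r) F i s) t (\sum_(i <- r) dF i).
Proof.
move=> F_dF; elim: r => [|x r IHr].
  by under eq_fun do rewrite big_nil; rewrite big_nil; exact: is_cderive_cst.
by under eq_fun do rewrite big_cons; rewrite big_cons; exact: is_cderiveD.
Qed.

Lemma is_cderive_prod (I : eqType) (r : seq I) (F : I -> R -> C) (dF : I -> C) t :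
  uniq r -> (forall i, is_cderive (F i) t (dF i)) ->
  is_cderive (fun s => \prod_(i <- r) F i s) t
    (\sum_(j <- r) \prod_(i <- r) (if i == j then dF i else F i t)).
Proof.
move=> + F_dF; elim: r => [_|x r IHr /= /andP[xr ur]].
  by under eq_fun do rewrite big_nil; rewrite big_nil; exact: is_cderive_cst.
have neq_x i : i \in r -> (i == x) = false.
  by move=> ir; apply/negbTE; apply: contraNneq xr => <-.
under eq_fun do rewrite big_cons.
rewrite big_cons [X in _ + X]big_seq big_cons eqxx.
under [X in _ + X]eq_bigr => j jr do rewrite big_cons eq_sym neq_x //.
rewrite -big_seq -mulr_sumr.
under [X in _ * X + _]eq_big_seq => i ir do rewrite neq_x //.
exact: is_cderiveM (F_dF x) (IHr ur).
Qed.

Let near_eq_Re g h t : (\forall s \near t, g s = h s) ->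
  \forall s \near t, complex.Re (g s) = complex.Re (h s).
Proof. by apply: filterS => s ->. Qed.

Let near_eq_Im g h t : (\forall s \near t, g s = h s) ->
  \forall s \near t, complex.Im (g s) = complex.Im (h s).
Proof. by apply: filterS => s ->. Qed.

Lemma is_cderive_unique_near g h t a b : (\forall s \near t, g s = h s) ->
  is_cderive g t a -> is_cderive h t b -> a = b.
Proof.
move=> gh [ga1 ga2] [hb1 hb2].
have ha1 := near_eq_is_derive (near_eq_Re gh) ga1.
have ha2 := near_eq_is_derive (near_eq_Im gh) ga2.
by case: a b ha1 ha2 hb1 hb2 {ga1 ga2} => [a1 a2] [b1 b2] /= [_ <-] [_ <-] [_ <-] [_ <-].
Qed.
End ComplexDerivative.

Section MatrixDerivative.
Variable R : realType.
Local Notation C := R[i].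

Lemma is_cderive_mx_derive k (f : R -> 'M[C]_k) t i j : mx_derivable f t ->
  is_cderive (fun s => f s i j) t (mx_derive f t i j).
Proof.
move=> /(_ i j) [f1 f2]; rewrite /mx_derive mxE.
by split; rewrite /= derive1E; exact: derivableP.
Qed.

Lemma is_cderive_mxtrace k (f : R -> 'M[C]_k) t : mx_derivable f t ->
  is_cderive (fun s => \tr (f s)) t (\tr (mx_derive f t)).
Proof. by move=> f_der; apply: is_cderive_sum => i; exact: is_cderive_mx_derive. Qed.

Lemma mx_derive_selfadjoint k (f : R -> 'M[C]_k) t :
  (\forall s \near t, selfadjoint (f s)) -> mx_derivable f t ->
  selfadjoint (mx_derive f t).
Proof.
move=> f_sa f_der; apply/matrixP => i j.
have -> : adjmx (mx_derive f t) i j = conjc (mx_derive f t j i) by rewrite !mxE.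
apply: (is_cderive_unique_near (h := fun s => f s i j) _
  (is_cderive_conj (is_cderive_mx_derive j i f_der))).
  by apply: filterS f_sa => s /matrixP /(_ i j); rewrite !mxE.
exact: is_cderive_mx_derive.
Qed.

Variables n d : nat.
Local Notation N := (tdim n d).

Definition tensprod_derive (rho : 'I_n -> R -> 'M[C]_d) (t : R) : 'M[C]_N :=
  \sum_(j < n) tensprod (fun k => if k == j then mx_derive (rho k) t else rho k t).

Lemma is_cderive_mxtrace_tensprod (rho : 'I_n -> R -> 'M[C]_d) t (M : 'M[C]_N) :
  (forall k, mx_derivable (rho k) t) ->
  is_cderive (fun s => \tr (tensprod (fun k => rho k s) *m M)) t
    (\tr (tensprod_derive rho t *m M)).
Proof.
move=> rho_der.
have trE (X : 'M[C]_N) : \tr (X *m M) = \sum_a \sum_b X a b * M b a.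
  by apply: eq_bigr => a _; rewrite mxE.
under eq_fun do rewrite trE; rewrite trE.
apply: is_cderive_sum => a; apply: is_cderive_sum => b; apply: is_cderiveMr.
under eq_fun do rewrite mxE; rewrite summxE.
under eq_bigr do rewrite mxE.
have ifE (c : bool) (A B : 'M[C]_d) x y :
  (if c then A else B) x y = if c then A x y else B x y by case: c.
under eq_bigr do under eq_bigr do rewrite ifE.
apply: is_cderive_prod (index_enum_uniq _) _ => k.
exact: is_cderive_mx_derive.
Qed.
End MatrixDerivative.

Lemma quadratic_ge0_inv_le (F : numFieldType) (v j : F) : 0 <= j ->
  (forall l, l \is Num.real -> 0 <= v - 2%:R * l + l ^+ 2 * j) -> 0 < j /\ j^-1 <= v.
Proof.
move=> j_ge0 q_ge0.
have v_ge0 : 0 <= v by have := q_ge0 0 (real0 _); rewrite mulr0 subr0 expr0n mul0r addr0.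
have j_gt0 : 0 < j.
  rewrite lt_def j_ge0 andbT; apply/eqP => j0.
  have := q_ge0 (v + 1) (realD (ger0_real v_ge0) (real1 _)).
  rewrite j0 mulr0 addr0 (_ : _ - _ = - (v + 2%:R)); last by ring.
  by rewrite oppr_ge0 lt_geF // ltr_wpDl // ltr0n.
have jV_gt0 : 0 < j^-1 by rewrite invr_gt0.
split=> //; have := q_ge0 j^-1 (ger0_real (ltW jV_gt0)).
rewrite (_ : _ + _ = v - j^-1) ?subr_ge0 //.
by field; rewrite gt_eqF.
Qed.

Section TraceForm.
Variables (R : realType) (k : nat) (P : 'M[R[i]]_k).
Local Notation C := R[i].
Implicit Types Y Z : 'M[C]_k.

Definition trform Y Z : C := \tr (adjmx Y *m P *m Z).

Lemma trformDl Y1 Y2 Z : trform (Y1 + Y2) Z = trform Y1 Z + trform Y2 Z.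
Proof. by rewrite /trform adjmxD !mulmxDl mxtraceD. Qed.

Lemma trformDr Y Z1 Z2 : trform Y (Z1 + Z2) = trform Y Z1 + trform Y Z2.
Proof. by rewrite /trform !mulmxDr mxtraceD. Qed.

Lemma trformBl Y1 Y2 Z : trform (Y1 - Y2) Z = trform Y1 Z - trform Y2 Z.
Proof. by rewrite /trform adjmxD adjmxN !mulmxDl !mulNmx mxtraceD linearN. Qed.

Lemma trformBr Y Z1 Z2 : trform Y (Z1 - Z2) = trform Y Z1 - trform Y Z2.
Proof. by rewrite /trform !mulmxDr mulmxN mxtraceD linearN. Qed.

Lemma trformZl (c : C) Y Z : trform (c *: Y) Z = conjc c * trform Y Z.
Proof. by rewrite /trform adjmxZ -!scalemxAl mxtraceZ. Qed.

Lemma trformZr (c : C) Y Z : trform Y (c *: Z) = c * trform Y Z.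
Proof. by rewrite /trform -scalemxAr mxtraceZ. Qed.

Lemma trform_ge0 Y : posdef P -> 0 <= trform Y Y.
Proof.
rewrite /trform => /posdef_factor [T ->]; rewrite !mulmxA -adjmxM -mulmxA.
exact: mxtrace_adjmx_mul_ge0.
Qed.

Lemma trform_selfadjoint Y : selfadjoint Y -> trform Y Y = \tr (P *m (Y *m Y)).
Proof.
by move=> saY; rewrite /trform saY [LHS]mxtrace_mulC [in LHS]mulmxA [LHS]mxtrace_mulC.
Qed.
End TraceForm.

Definition logderiv_sym (R : realType) k (P D : 'M[R[i]]_k) : 'M[R[i]]_k :=
  (2%:R)^-1 *: (invmx P *m D + D *m invmx P).

Section CramerRao.
Variables (R : realType) (k : nat) (P D X : 'M[R[i]]_k).
Hypotheses (P_pd : posdef P) (D_sa : selfadjoint D) (X_sa : selfadjoint X).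
Hypothesis trDX : \tr (D *m X) = 1.
Local Notation f := (trform P).

Let P_unit : P \in unitmx := posdef_unit P_pd.
Let Pi := invmx P.
Let A := Pi *m D.
Let As := D *m Pi.

Let adjA : adjmx A = As.
Proof. by rewrite adjmxM D_sa (selfadjoint_invmx P_unit P_pd.1). Qed.

Let adjAs : adjmx As = A.
Proof. by rewrite adjmxM D_sa (selfadjoint_invmx P_unit P_pd.1). Qed.

Let fXA : f X A = 1.
Proof. by rewrite /trform X_sa /A /Pi -mulmxA mulKVmx // mxtrace_mulC. Qed.

Let fAX : f A X = 1.
Proof. by rewrite /trform adjA /As /Pi mulmxKV. Qed.

Let fAAs : f A As = f A A.
Proof.
rewrite /trform adjA /As /A /Pi !mulmxKV //.
by rewrite [LHS]mxtrace_mulC mulmxA.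
Qed.

Let fAsA : f As A = f A A.
Proof.
rewrite /trform adjA adjAs /As /A /Pi -[in LHS]mulmxA mulKVmx // mulmxKV //.
by rewrite [LHS]mxtrace_mulC.
Qed.

Lemma cramer_rao_mx :
  (\tr (P *m (logderiv_sym P D *m logderiv_sym P D)))^-1 <= \tr (P *m (X *m X)).
Proof.
set H := logderiv_sym P D; set J := f A A; set K := f As As.
have [J_gt0 JV] : 0 < J /\ J^-1 <= f X X.
  apply: quadratic_ge0_inv_le => [|l lr]; first exact: trform_ge0.
  have lJ : conjc l = l := conj_Creal lr.
  have := trform_ge0 (X - l *: A) P_pd.
  by rewrite trformBl !trformBr !trformZl !trformZr lJ fXA fAX; congr (_ <= _); ring.
have half_conj : conjc ((2%:R)^-1) = (2%:R)^-1 :> R[i] by rewrite conjc_inv conjc_nat.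
have H_sa : selfadjoint H by rewrite /selfadjoint adjmxZ adjmxD adjA adjAs half_conj addrC.
have HE : f H H = J + (4%:R)^-1 * (K - J).
  rewrite trformZl trformZr trformDl !trformDr fAAs fAsA half_conj -/J -/K.
  by field.
have JH : J <= f H H.
  rewrite HE lerDl mulr_ge0 ?invr_ge0 ?ler0n //.
  have := trform_ge0 (A - As) P_pd.
  by rewrite trformBl !trformBr fAAs fAsA -/J -/K; congr (_ <= _); ring.
rewrite -!trform_selfadjoint //; apply: le_trans JV.
by rewrite lef_pV2 // posrE (lt_le_trans J_gt0 JH).
Qed.
End CramerRao.

Section ProductFamily.
Variables (R : realType) (n d : nat) (rho : 'I_n -> R -> 'M[R[i]]_d) (t : R).

Lemma mxtrace_mul_Htilde k : rho k t \in unitmx ->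
  \tr (rho k t *m Htilde (rho k) t) = \tr (mx_derive (rho k) t).
Proof.
move=> rho_unit; rewrite /Htilde -scalemxAr mxtraceZ mulmxDr mxtraceD mulKVmx //.
rewrite mulmxA [X in _ + X]mxtrace_mulC mulKmx //.
by field.
Qed.

Lemma sum_embed_Htilde : (forall k, rho k t \in unitmx) ->
  \sum_(j < n) embed_at j (Htilde (rho j) t) =
  logderiv_sym (tensprod (fun k => rho k t)) (tensprod_derive rho t).
Proof.
move=> rho_unit; rewrite /logderiv_sym invmx_tensprod // mulmx_sumr mulmx_suml.
rewrite -big_split scaler_sumr; apply: eq_bigr => j _.
rewrite /Htilde embed_atZ embed_atD !embed_atE !mul_tensprod.
by congr (_ *: (_ + _)); congr tensprod; apply: funext => k;
  case: eqP => [->|_]; rewrite ?mulVmx ?mulmxV.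
Qed.

Lemma selfadjoint_tensprod_derive :
  (forall k, \forall s \near t, selfadjoint (rho k s)) ->
  (forall k, mx_derivable (rho k) t) -> selfadjoint (tensprod_derive rho t).
Proof.
move=> rho_sa rho_der; rewrite /selfadjoint adjmx_sum; apply: eq_bigr => j _.
rewrite adjmx_tensprod; congr tensprod; apply: funext => k; case: eqP => _.
  exact: mx_derive_selfadjoint.
exact: (nbhs_singleton (rho_sa k)).
Qed.
End ProductFamily.

Unset Implicit Arguments. Set Strict Implicit.

Theorem mainTheorem9 (R : realType) (d n : nat) (I : set R)
  (rho : 'I_n -> R -> 'M[R[i]]_d) (Theta : 'M[R[i]]_(tdim n d)) :
  (0 < n)%N ->
  open I -> is_interval I ->
  (forall j t, I t -> posdef_density (rho j t)) ->
  (forall j t, I t -> mx_derivable (rho j) t) ->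
  selfadjoint Theta ->
  (forall t, I t -> \tr (tensprod (fun j => rho j t) *m Theta) = t%:C) ->
  forall theta, I theta ->
    let varrho := tensprod (fun j => rho j theta) in
    let Th := Theta - theta%:C%:M in
    (\sum_(j < n) Itilde (rho j) theta)^-1 <= \tr (varrho *m (Th *m Th))
    /\
    \sum_(j < n) Itilde (rho j) theta =
      \tr (varrho *m ((\sum_(j < n) embed_at j (Htilde (rho j) theta))
                      *m (\sum_(j < n) embed_at j (Htilde (rho j) theta)))).
Proof.
(* The bound is pointwise in theta: only openness of I is needed, to differentiate. *)
move=> _ I_open _ rho_pd rho_der Theta_sa unbiased theta I_theta varrho Th.
have near_I : \forall s \near theta, I s by apply: open_nbhs_nbhs.
have rho_unit k : rho k theta \in unitmx := posdef_unit (rho_pd k theta I_theta).1.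
have tr_derive_rho k : \tr (mx_derive (rho k) theta) = 0.
  apply: (is_cderive_unique_near _ (is_cderive_mxtrace (rho_der k theta I_theta))
    (is_cderive_cst 1 theta)).
  by apply: filterS near_I => s /(rho_pd k)[].
set D := tensprod_derive rho theta.
have tr_D : \tr D = 0.
  rewrite raddf_sum big1 // => j _ /=.
  by rewrite mxtrace_tensprod (bigD1 j) //= eqxx tr_derive_rho mul0r.
have tr_D_Theta : \tr (D *m Theta) = 1.
  apply: (is_cderive_unique_near _
    (is_cderive_mxtrace_tensprod Theta (fun k => rho_der k theta I_theta))
    (is_cderive_Cr theta)).
  exact: filterS near_I => s /unbiased.
have Fisher := mxtrace_tensprod_sum_embed_sqr (fun k => (rho_pd k theta I_theta).2)
  (fun k => etrans (mxtrace_mul_Htilde (rho_unit k)) (tr_derive_rho k)).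
split; last by rewrite Fisher.
rewrite -Fisher sum_embed_Htilde //; apply: cramer_rao_mx.
- by apply: posdef_tensprod => k; case: (rho_pd k theta I_theta).
- apply: selfadjoint_tensprod_derive (fun k => rho_der k theta I_theta) => k.
  by apply: filterS near_I => s /(rho_pd k)[[]].
- by rewrite /selfadjoint adjmxD adjmxN Theta_sa adjmx_scalar conjc_real.
- rewrite mulmxBr mxtraceD linearN tr_D_Theta mul_mx_scalar /=.
  by rewrite mxtraceZ tr_D mulr0 subr0.
Qed.
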